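(* Let $\mathbb{K}\in\{\mathbb{R},\mathbb{C}\}$ and let $X$ be an infinite-dimensional normed vector space over $\mathbb{K}$. Let $U\neq\emptyset$ be a convex open subset of $X$ and let $L$ be a linear subspace of $X$ with $\operatorname{codim} L\geq 2$. Then $U\setminus L$ is dense in $U$ and pathwise connected.
   Context: $\operatorname{codim} L$ denotes the (possibly finite, possibly infinite cardinal) algebraic codimension of $L$ in $X$: $\operatorname{codim} L=\kappa$ iff some Hamel basis $B$ of $X$ has a subset $B'$ with $\operatorname{span}(B')=L$ and $|B\setminus B'|=\kappa$. Topological notions refer to the norm topology. *)

From HB Require Import structures.
From mathcomp Require Import all_boot all_order all_algebra.
From mathcomp Require Import all_classical all_reals all_analysis.
From mathcomp Require Import complex.
Set Implicit Arguments. Unset Strict Implicit. Unset Printing Implicit Defensive.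
Import Order.TTheory GRing.Theory Num.Theory.
Import numFieldNormedType.Exports.
Local Open Scope classical_set_scope.
Local Open Scope ring_scope.

Section LinAlg.
Variables (K : numFieldType) (X : lmodType K).

Definition span (B : set X) : set X :=
  [set x | exists (s : seq X) (c : seq K),
      size c = size s /\ (forall v, v \in s -> B v) /\
      x = \sum_(i < size s) c`_i *: s`_i].

Definition lin_indep (B : set X) : Prop :=
  forall (s : seq X) (c : seq K),
    uniq s -> size c = size s -> (forall v, v \in s -> B v) ->
    \sum_(i < size s) c`_i *: s`_i = 0 -> forall i, (i < size s)%N -> c`_i = 0.

Definition hamel_basis (B : set X) : Prop := lin_indep B /\ span B = setT.

Definition lin_subspace (L : set X) : Prop :=
  L 0 /\ (forall x y, L x -> L y -> L (x + y)) /\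
  (forall (a : K) x, L x -> L (a *: x)).

Definition codim_ge2 (L : set X) : Prop :=
  exists B B' : set X, hamel_basis B /\ B' `<=` B /\ span B' = L /\
    exists b1 b2, (B `\` B') b1 /\ (B `\` B') b2 /\ b1 <> b2.

Definition infinite_dim : Prop := ~ exists s : seq X, span [set` s] = setT.

End LinAlg.

Definition path_connected (R : realType) (T : topologicalType) (A : set T) : Prop :=
  forall x y, A x -> A y ->
    exists f : R -> T, f 0 = x /\ f 1 = y /\
      {within `[0, 1], continuous f} /\ f @` `[0, 1] `<=` A.

From Pilot Require Import Defs.
From HB Require Import structures.
From mathcomp Require Import all_boot all_order all_algebra.
From mathcomp Require Import all_classical all_reals all_analysis.
From mathcomp Require Import complex.
Import Order.TTheory GRing.Theory Num.Theory.
Import numFieldNormedType.Exports.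
Local Open Scope classical_set_scope.
Local Open Scope ring_scope.
Set Implicit Arguments. Unset Strict Implicit. Unset Printing Implicit Defensive.

(* Codimension at least 2 yields, for every d outside L, a w such that no
   nontrivial combination of d and w lies in L: in X/L the class of d is nonzero
   and cannot be parallel to both of two independent classes.  Density is then
   immediate: for x in L and b outside L, x + c b is outside L when c != 0.  Given x, y in
   U \ L, either the segment [x, y] misses L, or it meets L at one point and then
   d = y - x is outside L; in the latter case the plane x + <d, w> meets L in that
   single point, which the bent path s |-> x + s d + c s (1 - s) w avoids for
   0 < s < 1 and c != 0.  For small c the bent path stays in U by convexity. *)

Section LinearAlgebra.
Variables (K : numFieldType) (X : lmodType K).
Implicit Types (B L : set X) (x y : X).

Lemma lin_subspaceD L x y : lin_subspace L -> L x -> L y -> L (x + y).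
Proof. by case=> _ [LD _]; exact: LD. Qed.

Lemma lin_subspaceZ L (a : K) x : lin_subspace L -> L x -> L (a *: x).
Proof. by case=> _ [_ LZ]; exact: LZ. Qed.

Lemma lin_subspaceB L x y : lin_subspace L -> L x -> L y -> L (x - y).
Proof.
move=> HL Lx Ly; rewrite -scaleN1r.
by apply: lin_subspaceD => //; exact: lin_subspaceZ.
Qed.

Lemma lin_subspaceZ_inv L (a : K) x : lin_subspace L -> a != 0 -> L (a *: x) -> L x.
Proof. by move=> HL a0 /(lin_subspaceZ a^-1 HL); rewrite scalerA mulVf // scale1r. Qed.

Lemma lin_indep_sum0 B (t : seq X) (f : X -> K) :
  lin_indep B -> uniq t -> (forall v, v \in t -> B v) ->
  \sum_(v <- t) f v *: v = 0 -> forall v, v \in t -> f v = 0.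
Proof.
move=> HB ut tB t0 v vt.
have sum_ord : \sum_(v <- t) f v *: v = \sum_(i < size t) (map f t)`_i *: t`_i.
  by rewrite (big_nth 0) big_mkord; apply: eq_bigr => i _; rewrite (nth_map 0).
have := HB t (map f t) ut (size_map _ _) tB; rewrite -sum_ord => /(_ t0 (index v t)).
by rewrite (nth_map 0) ?index_mem // nth_index // => ->.
Qed.

Lemma span_uniq_sum B x : Defs.span B x ->
  exists (t : seq X) (f : X -> K), [/\ uniq t, forall v, v \in t -> B v &
    x = \sum_(v <- t) f v *: v].
Proof.
move=> [s [c [_ [sB ->]]]].
exists (undup s), (fun v => \sum_(i < size s | s`_i == v) c`_i).
split; [exact: undup_uniq | by move=> v; rewrite mem_undup; exact: sB |].
have collect v : (\sum_(i < size s | s`_i == v) c`_i) *: v =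
    \sum_(i < size s) (if s`_i == v then c`_i *: s`_i else 0).
  rewrite scaler_suml big_mkcond /=; apply: eq_bigr => i _.
  by case: eqP => [->|]; rewrite ?scale0r.
under [RHS]eq_bigr => v _ do rewrite collect.
rewrite /= exchange_big /=; apply: eq_bigr => i _.
rewrite (bigD1_seq s`_i) ?undup_uniq ?mem_undup ?mem_nth //= eqxx.
by rewrite big1 ?addr0 // => v /negbTE; rewrite eq_sym => ->.
Qed.

Definition indep_mod L (u v : X) : Prop :=
  forall p q : K, L (p *: u + q *: v) -> p = 0 /\ q = 0.

Lemma indep_mod_basis B B' b1 b2 :
  lin_indep B -> B' `<=` B -> (B `\` B') b1 -> (B `\` B') b2 -> b1 <> b2 ->
  indep_mod (Defs.span B') b1 b2.
Proof.
move=> HB sB [Bb1 nb1] [Bb2 nb2] b12 a1 a2 /span_uniq_sum [t [f [ut tB' E]]].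
have b1t : b1 \notin t by apply/negP => /tB'.
have b2t : b2 \notin t by apply/negP => /tB'.
have b21 : (b2 == b1) = false by apply/eqP => e; apply: b12.
pose g v := if v == b1 then a1 else if v == b2 then a2 else - f v.
have g_t v : v \in t -> g v = - f v.
  move=> vt; rewrite /g; case: eqP => [e|_]; first by rewrite -e vt in b1t.
  by case: eqP => [e|_]; first by rewrite -e vt in b2t.
have u3 : uniq [:: b1, b2 & t] by rewrite /= inE negb_or b1t b2t ut eq_sym b21.
have B3 v : v \in [:: b1, b2 & t] -> B v.
  by rewrite !inE => /orP[/eqP->|/orP[/eqP->|/tB'/sB]].
have sum3 : \sum_(v <- [:: b1, b2 & t]) g v *: v = 0.
  rewrite !big_cons big_seq (eq_bigr (fun v => - (f v *: v))) => [|v vt].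
    by rewrite -big_seq sumrN -E /g eqxx b21 eqxx addrA subrr.
  by rewrite g_t // scaleNr.
have g0 := lin_indep_sum0 HB u3 B3 sum3.
have := g0 b1; rewrite /g eqxx inE eqxx => /(_ isT) ->.
by have := g0 b2; rewrite /g b21 eqxx !inE eqxx orbT => /(_ isT) ->.
Qed.

Lemma codim_ge2_indep_mod L : codim_ge2 L -> exists b1 b2, indep_mod L b1 b2.
Proof.
move=> [B [B' [[HB _] [sB [spL [b1 [b2 [h1 [h2 b12]]]]]]]]].
by exists b1, b2; rewrite -spL; exact: (indep_mod_basis HB sB h1 h2 b12).
Qed.

Lemma indep_mod_notin L u v : indep_mod L u v -> ~ L u.
Proof.
move=> Huv Lu; have [] := Huv 1 0; first by rewrite scale0r addr0 scale1r.
by move/eqP; rewrite oner_eq0.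
Qed.

Lemma indep_modC L u v : indep_mod L u v -> indep_mod L v u.
Proof. by move=> Huv p q; rewrite addrC => /Huv []. Qed.

Lemma not_indep_mod L d b : lin_subspace L -> ~ L b -> ~ indep_mod L d b ->
  exists a : K, L (d + a *: b).
Proof.
move=> HL nb /existsNP [p /existsNP [q /not_implyP [Lpq npq]]].
have [p0|pn0] := eqVneq p 0.
  move: Lpq; rewrite p0 scale0r add0r => Lq.
  have [q0|qn0] := eqVneq q 0; first by case: npq.
  by case: nb; exact: lin_subspaceZ_inv Lq.
exists (q / p); apply: (lin_subspaceZ_inv HL pn0).
by rewrite scalerDr scalerA mulrCA mulfV // mulr1.
Qed.

Lemma indep_mod_complement L b1 b2 d : lin_subspace L -> indep_mod L b1 b2 ->
  ~ L d -> exists w, indep_mod L d w.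
Proof.
move=> HL H12 nd.
have [H1|n1] := pselect (indep_mod L d b1); first by exists b1.
have [H2|n2] := pselect (indep_mod L d b2); first by exists b2.
have [a1 L1] := not_indep_mod HL (indep_mod_notin H12) n1.
have [a2 L2] := not_indep_mod HL (indep_mod_notin (indep_modC H12)) n2.
have := lin_subspaceB HL L1 L2.
rewrite opprD addrACA subrr add0r -scaleNr => /H12 [a10 _].
by case: nd; move: L1; rewrite a10 scale0r addr0.
Qed.

End LinearAlgebra.

Section SubspaceComplement.
Variables (K : numFieldType) (X : normedModType K).
Implicit Types (A U L : set X) (x y w : X).

Lemma nbhs_shift_nonzero A x w : nbhs x A -> exists2 c : K, c != 0 & A (x + c *: w).
Proof.
move=> Ax.
have shift_cont : {for 0, continuous (fun c : K => x + c *: w)}.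
  by apply: continuousD; [exact: cst_continuous | exact: continuousZr_tmp].
have Ashift : \forall c \near 0^', A (x + c *: w).
  by apply: nbhs_dnbhs; apply: shift_cont; rewrite /= scale0r addr0.
by have [c [c0 Ac]] := filter_ex (filterI (nbhs_dnbhs_neq 0) Ashift); exists c.
Qed.

Lemma subset_closure_setD_subspace U L b : open U -> lin_subspace L -> ~ L b ->
  U `<=` closure (U `\` L).
Proof.
move=> oU HL nb x Ux; have [xL|nxL] := pselect (L x); last exact: subset_closure.
move=> N Nx; have UNx : nbhs x (U `&` N).
  by apply: filterI => //; exact: open_nbhs_nbhs.
have [c c0 [Uc Nc]] := nbhs_shift_nonzero b UNx.
exists (x + c *: b); split => //; split => // Lc.
apply/nb/(lin_subspaceZ_inv HL c0).
by move: (lin_subspaceB HL Lc xL); rewrite addrC addKr.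
Qed.

Lemma convex_set_comb U a b (s : K) : convex_set U -> U a -> U b -> 0 <= s <= 1 ->
  U (s *: a + (1 - s) *: b).
Proof.
by move=> cU Ua Ub /andP[s0 s1]; have := cU a b (Itv01 s0 s1); rewrite !inE; apply.
Qed.

(* For K = R[i] the partial order makes [0 <= s <= 1] the real unit interval. *)
Definition scalar_path A x y (g : K -> X) :=
  [/\ continuous g, g 0 = x, g 1 = y & forall s : K, 0 <= s <= 1 -> A (g s)].

Definition bent_path x y w (c s : K) : X :=
  x + s *: (y - x) + (c * s * (1 - s)) *: w.

Lemma bent_path_continuous x y w c : continuous (bent_path x y w c).
Proof.
move=> s; apply: (cvgD (F := nbhs s)).
  apply: (cvgD (F := nbhs s)); first exact: cvg_cst.
  by apply: cvgZr_tmp; exact: cvg_id.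
apply: cvgZr_tmp; apply: (cvgM (F := nbhs s)).
  by apply: (cvgM (F := nbhs s)); [exact: cvg_cst | exact: cvg_id].
by apply: (cvgB (F := nbhs s)); [exact: cvg_cst | exact: cvg_id].
Qed.

Lemma bent_path_convex U x y w c s : convex_set U -> U x -> U y -> U (x + c *: w) ->
  0 <= s <= 1 -> U (bent_path x y w c s).
Proof.
move=> cU Ux Uy Uxw s01.
have Umid : U (x + (s * c) *: w).
  have := convex_set_comb cU Uxw Ux s01.
  by rewrite scalerDr scalerA addrAC -scalerDl [s + _]addrC subrK scale1r.
have := convex_set_comb cU Uy Umid s01.
rewrite /bent_path scalerDr scalerA scalerBl scale1r scalerBr.
by rewrite [(1 - s) * _]mulrC [s * c]mulrC !addrA [s *: y + x]addrC.
Qed.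

Lemma bent_path_notin L x y w c s s0 : lin_subspace L -> ~ L x -> ~ L y -> c != 0 ->
  indep_mod L (y - x) w -> L (x + s0 *: (y - x)) -> ~ L (bent_path x y w c s).
Proof.
move=> HL nx ny c0 Hw Ls0 Ls.
have := lin_subspaceB HL Ls Ls0.
have -> : bent_path x y w c s - (x + s0 *: (y - x)) =
    (s - s0) *: (y - x) + (c * s * (1 - s)) *: w.
  by rewrite /bent_path scalerBl opprD addrAC addrACA subrr add0r.
move=> /Hw [_ /eqP]; rewrite !mulf_eq0 (negbTE c0) subr_eq0 /= => /orP[]/eqP s_end.
  by apply: nx; move: Ls; rewrite /bent_path s_end scale0r mulr0 mul0r scale0r !addr0.
apply: ny; move: Ls.
by rewrite /bent_path -s_end scale1r subrr mulr0 scale0r addr0 addrC subrK.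
Qed.

Lemma scalar_path_bent U L x y w c : convex_set U -> U x -> U y -> U (x + c *: w) ->
  (forall s, 0 <= s <= 1 -> ~ L (bent_path x y w c s)) ->
  scalar_path (U `\` L) x y (bent_path x y w c).
Proof.
move=> cU Ux Uy Uxw nL; split; first exact: bent_path_continuous.
- by rewrite /bent_path scale0r mulr0 mul0r scale0r !addr0.
- by rewrite /bent_path scale1r subrr mulr0 scale0r addr0 addrC subrK.
- by move=> s s01; split; [exact: bent_path_convex | exact: nL].
Qed.

Lemma scalar_path_setD_subspace U L x y : open U -> convex_set U ->
  lin_subspace L -> codim_ge2 L -> (U `\` L) x -> (U `\` L) y ->
  exists g, scalar_path (U `\` L) x y g.
Proof.
move=> oU cU HL HC [Ux nx] [Uy ny].
have [[s0 Ls0]|segment] := pselect (exists s0 : K, L (x + s0 *: (y - x))); last first.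
  exists (bent_path x y 0 0); apply: scalar_path_bent => // [|s _].
    by rewrite scaler0 addr0.
  by rewrite /bent_path scaler0 addr0 => Ls; apply: segment; exists s.
have nd : ~ L (y - x).
  move=> Ld; apply: nx.
  by move: (lin_subspaceB HL Ls0 (lin_subspaceZ s0 HL Ld)); rewrite addrK.
have [b1 [b2 H12]] := codim_ge2_indep_mod HC.
have [w Hw] := indep_mod_complement HL H12 nd.
have [c c0 Uc] := nbhs_shift_nonzero w (open_nbhs_nbhs (conj oU Ux)).
exists (bent_path x y w c); apply: scalar_path_bent => // s _.
exact: bent_path_notin Ls0.
Qed.

End SubspaceComplement.

Section RealParameter.
Variables (R : realType) (K : numFieldType) (X : normedModType K).
Variable iota : {rmorphism R -> K}.
Hypotheses (iota_homo : {homo iota : s t / s <= t}) (iota_cont : continuous iota).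

Lemma path_connected_scalar (A : set X) :
  (forall x y, A x -> A y -> exists g, scalar_path A x y g) -> path_connected R A.
Proof.
move=> paths x y Ax Ay; have [g [g_cont g0 g1 gA]] := paths x y Ax Ay.
exists (g \o iota); rewrite /= rmorph0 rmorph1; do 3 split => //.
  apply: continuous_subspaceT => t.
  by apply: continuous_comp; [exact: iota_cont | exact: g_cont].
move=> _ [t /andP[t0 t1] <-]; apply: gA.
by rewrite -(rmorph0 iota) -(rmorph1 iota) !iota_homo.
Qed.

Lemma convex_open_setD_subspace (U L : set X) : open U -> convex_set U ->
  lin_subspace L -> codim_ge2 L ->
  U `<=` closure (U `\` L) /\ path_connected R (U `\` L).
Proof.
move=> oU cU HL HC; split.
  have [b1 [b2 /indep_mod_notin nb1]] := codim_ge2_indep_mod HC.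
  exact: subset_closure_setD_subspace nb1.
by apply: path_connected_scalar => x y; exact: scalar_path_setD_subspace.
Qed.

End RealParameter.

Local Open Scope complex_scope.

Lemma normc_real_complex (R : realType) (t : R) : `|t%:C| = `|t|%:C.
Proof. by rewrite normc_def /= expr0n addr0 sqrtr_sqr. Qed.

Lemma real_complex_continuous (R : realType) :
  continuous (fun t : R => t%:C : (R[i] : numFieldType)).
Proof.
move=> t; apply/cvgrPdist_lt => e e0.
have eRe : e = (complex.Re e)%:C by rewrite RRe_real // gtr0_real.
have Re_gt0 : 0 < complex.Re e by rewrite -ltcR -eRe.
near=> s; rewrite -raddfB normc_real_complex eRe ltcR.
by near: s; exact: (cvgr_dist_lt (F := nbhs t) id t cvg_id _ Re_gt0).
Unshelve. all: by end_near.
Qed.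

Theorem lemma1 (R : realType) :
  (forall (X : normedModType R) (U L : set X),
      infinite_dim X -> U !=set0 -> open U -> convex_set U ->
      lin_subspace L -> codim_ge2 L ->
      U `<=` closure (U `\` L) /\ path_connected R (U `\` L)) /\
  (forall (X : normedModType R[i]) (U L : set X),
      infinite_dim X -> U !=set0 -> open U -> convex_set U ->
      lin_subspace L -> codim_ge2 L ->
      U `<=` closure (U `\` L) /\ path_connected R (U `\` L)).
Proof.
split=> X U L _ _.
  exact: (@convex_open_setD_subspace R R X idfun (fun s t => id) (fun t => cvg_id)).
apply: (@convex_open_setD_subspace R R[i] X (real_complex R)) => [s t|].
  by rewrite lecR.
exact: real_complex_continuous.
Qed.
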